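(* Let $p$ be a prime and $0<\alpha\leq 1$. Then the generic $\alpha$-complexity of the whole field $\mathbb{Z}_p$ satisfies $$\sqrt{2\alpha p}<\mathcal{C}_{\alpha}(\mathbb{Z}_p)\leq 2\lceil\sqrt{\alpha p}\rceil.$$
   Context: $\mathbb{Z}_p$ denotes the field of residues modulo the prime $p$. For a set of pairs $L\subseteq\mathbb{Z}_p^2$, its intersection set is $I(L)=\{x\in\mathbb{Z}_p\mid \exists (a,b),(a',b')\in L \text{ with } (a,b)\neq(a',b') \text{ and } ax+b=a'x+b'\}$. For $S\subseteq\mathbb{Z}_p$ and $0<\alpha\leq1$, the generic $\alpha$-complexity $\mathcal{C}_\alpha(S)$ is the smallest cardinality of a set $L\subseteq\mathbb{Z}_p^2$ with $|S\cap I(L)|\geq\alpha|S|$. *)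

From mathcomp Require Import all_boot all_order all_algebra.
From mathcomp Require Import reals.
Set Implicit Arguments. Unset Strict Implicit. Unset Printing Implicit Defensive.
Import Order.TTheory GRing.Theory Num.Theory.
Local Open Scope ring_scope.

(* Intersection set I(L) of a set of pairs (a,b) representing lines x |-> a x + b
   over the prime field 'F_p. *)
Definition intersection_set (p : nat) (L : {set 'F_p * 'F_p}) : {set 'F_p} :=
  [set x : 'F_p | [exists l1 in L, exists l2 in L,
     (l1 != l2) && (l1.1 * x + l1.2 == l2.1 * x + l2.2)]].

Definition covers (R : realType) (p : nat) (alpha : R) (S : {set 'F_p})
    (L : {set 'F_p * 'F_p}) : Prop :=
  alpha * (#|S|%:R) <= (#|S :&: intersection_set L|%:R).

Definition is_generic_complexity (R : realType) (p : nat) (alpha : R)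
    (S : {set 'F_p}) (c : nat) : Prop :=
  (exists L : {set 'F_p * 'F_p}, #|L| = c /\ covers alpha S L) /\
  (forall L : {set 'F_p * 'F_p}, covers alpha S L -> (c <= #|L|)%N).

From mathcomp Require Import all_boot all_order all_algebra.
From mathcomp Require Import reals.
From mathcomp Require Import ring.

Set Implicit Arguments.
Unset Strict Implicit.
Unset Printing Implicit Defensive.

Import Order.TTheory GRing.Theory Num.Theory.
Local Open Scope ring_scope.

(* Lower bound: two distinct lines meet in at most one point, so a set of n
   lines has at most C(n,2) intersection points; covering a fraction alpha of
   Z_p thus forces alpha p <= n(n-1)/2 < n^2/2.
   Upper bound: with k = ceil(sqrt(alpha p)), the k horizontal lines y = i k and
   the k lines y = x - j (i, j < k) meet at x = i k + j, which reaches every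
   residue below min(k^2, p) >= alpha p. *)

Lemma sqrt2_lt_of_le_bin2 (R : rcfType) (a : R) n :
  0 < a -> a <= 'C(n, 2)%:R -> Num.sqrt (2 * a) < n%:R.
Proof.
move=> a_gt0 le_a_bin; have n_gt0 : (0 < n)%N.
  by rewrite lt0n; apply: contraTneq le_a_bin => ->; rewrite bin0n -ltNge.
have lt_bin2 : ('C(n, 2).*2 < n * n)%N.
  rewrite bin2 halfK; apply: leq_ltn_trans (leq_subr _ _) _.
  by rewrite ltn_pmul2l // ltn_predL.
rewrite -[n%:R]ger0_norm // -sqrtr_sqr ltr_sqrt ?exprn_gt0 ?ltr0n //.
apply: le_lt_trans (_ : 'C(n, 2).*2%:R < _); last by rewrite expr2 -natrM ltr_nat.
by rewrite -mul2n natrM ler_pM2l.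
Qed.

Lemma ceil_sqrt_ge0 (R : realType) (x : R) : 0 <= Num.ceil (Num.sqrt x).
Proof. by rewrite ceil_ge0 (lt_le_trans _ (sqrtr_ge0 x)) ?ltrN10. Qed.

Lemma le_sqr_absz_ceil_sqrt (R : realType) (x : R) :
  0 <= x -> x <= (`|Num.ceil (Num.sqrt x)| * `|Num.ceil (Num.sqrt x)|)%:R.
Proof.
move=> x_ge0; rewrite natrM natr_absz ger0_norm ?ceil_sqrt_ge0 // -{1}(sqr_sqrtr x_ge0) expr2.
by apply: ler_pM; rewrite ?sqrtr_ge0 ?ceil_ge.
Qed.

Lemma generic_complexity_le (R : realType) p (alpha : R) (S : {set 'F_p})
    (L : {set 'F_p * 'F_p}) :
  covers alpha S L -> exists2 c, is_generic_complexity alpha S c & (c <= #|L|)%N.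
Proof.
move=> covL; pose P (L' : {set 'F_p * 'F_p}) :=
  alpha * #|S|%:R <= #|S :&: intersection_set L'|%:R.
have [Lmin covLmin minL] := arg_minnP (fun L' : {set 'F_p * 'F_p} => #|L'|) (covL : P L).
by exists #|Lmin|; [split; [exists Lmin | exact: minL] | exact: minL].
Qed.

Section Lines.

Variable p : nat.
Implicit Types (L : {set 'F_p * 'F_p}) (l : 'F_p * 'F_p) (x y : 'F_p).

Definition line_at l x : 'F_p := l.1 * x + l.2.

Lemma distinct_lines_meet_once l1 l2 x y : l1 != l2 ->
  line_at l1 x = line_at l2 x -> line_at l1 y = line_at l2 y -> x = y.
Proof.
case: l1 l2 => [a1 b1] [a2 b2]; rewrite /line_at /= => l12 eqx eqy.
have : (a1 - a2) * (x - y) = 0.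
  have -> : (a1 - a2) * (x - y)
      = (a1 * x + b1 - (a2 * x + b2)) - (a1 * y + b1 - (a2 * y + b2)) by ring.
  by rewrite eqx eqy !subrr.
move/eqP; rewrite mulf_eq0 !subr_eq0 => /orP[/eqP a12 | /eqP //].
by move: eqx l12; rewrite a12 => /addrI ->; rewrite eqxx.
Qed.

Definition concurrent_at (A : {set 'F_p * 'F_p}) x :=
  [forall l1 in A, forall l2 in A, line_at l1 x == line_at l2 x].

(* The default point 0 is only used for sets of lines with no common point. *)
Definition common_point (A : {set 'F_p * 'F_p}) : 'F_p :=
  odflt 0 [pick x | concurrent_at A x].

Lemma common_point_pair l1 l2 x : l1 != l2 ->
  line_at l1 x = line_at l2 x -> common_point [set l1; l2] = x.
Proof.
move=> l12 eqx; have concx : concurrent_at [set l1; l2] x.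
  by apply/forall_inP => u /set2P[]-> ; apply/forall_inP => v /set2P[]->;
     rewrite ?eqx eqxx.
rewrite /common_point; case: pickP => [y /forall_inP concy | /(_ x)] /=.
  have /forall_inP/(_ l2 (set22 _ _))/eqP eqy := concy l1 (set21 _ _).
  exact: esym (distinct_lines_meet_once l12 eqx eqy).
by rewrite concx.
Qed.

Lemma card_intersection_set L : (#|intersection_set L| <= 'C(#|L|, 2))%N.
Proof.
rewrite -cards_draws; apply: leq_trans (leq_imset_card common_point _).
apply: subset_leq_card; apply/subsetP => x; rewrite inE.
case/exists_inP=> l1 l1L /exists_inP[l2 l2L /andP[l12 /eqP eqx]].
apply/imsetP; exists [set l1; l2]; last by rewrite (common_point_pair l12 eqx).
by rewrite inE subUset !sub1set l1L l2L cards2 l12.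
Qed.

Definition grid_lines (k : nat) : {set 'F_p * 'F_p} :=
  [set (0, (i * k)%:R) | i : 'I_k] :|: [set (1, - j%:R) | j : 'I_k].

Lemma card_grid_lines k : (#|grid_lines k| <= k.*2)%N.
Proof.
rewrite cardsU -addnn; apply: leq_trans (leq_subr _ _) _.
by apply: leq_add; apply: leq_trans (leq_imset_card _ _) _; rewrite card_ord.
Qed.

Lemma grid_lines_meet_at m k : (m < k * k)%N ->
  m%:R \in intersection_set (grid_lines k).
Proof.
move=> ltmkk; have k_gt0 : (0 < k)%N by case: k ltmkk.
have ltqk : (m %/ k < k)%N by rewrite ltn_divLR.
have ltrk : (m %% k < k)%N by rewrite ltn_mod.
rewrite inE; apply/exists_inP; exists (0, (m %/ k * k)%:R).
  by rewrite !inE; apply/orP; left; apply/imsetP; exists (Ordinal ltqk).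
apply/exists_inP; exists (1, - (m %% k)%:R).
  by rewrite !inE; apply/orP; right; apply/imsetP; exists (Ordinal ltrk).
rewrite xpair_eqE eq_sym oner_eq0 /= mul0r add0r mul1r.
by rewrite {2}(divn_eq m k) natrD addrK.
Qed.

Hypothesis p_pr : prime p.

Lemma card_intersection_grid_lines k :
  (minn (k * k) p <= #|intersection_set (grid_lines k)|)%N.
Proof.
have ltp (m : 'I_(minn (k * k) p)) : (m < p)%N.
  exact: leq_trans (ltn_ord m) (geq_minr _ _).
have inj_residue : injective (fun m : 'I_(minn (k * k) p) => m%:R : 'F_p).
  move=> m1 m2 /(congr1 val) /=; rewrite !val_Fp_nat // !modn_small //.
  exact: val_inj.
rewrite -[X in (X <= _)%N]card_ord -(card_imset _ inj_residue).
apply/subset_leq_card/subsetP => _ /imsetP[m _ ->].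
exact/grid_lines_meet_at/(leq_trans (ltn_ord m))/geq_minl.
Qed.

Lemma covers_grid_lines (R : realType) (alpha : R) k :
  alpha <= 1 -> alpha * p%:R <= (k * k)%:R ->
  covers alpha [set: 'F_p] (grid_lines k).
Proof.
move=> alpha_le1 alpha_p_le; rewrite /covers cardsT card_Fp // setTI.
apply: le_trans (_ : (minn (k * k) p)%:R <= _); last first.
  by rewrite ler_nat card_intersection_grid_lines.
case: (leqP (k * k) p) => // _.
by rewrite -[X in _ <= X]mul1r ler_wpM2r.
Qed.

Lemma covers_sqrt_lt_card (R : realType) (alpha : R) L :
  0 < alpha -> covers alpha [set: 'F_p] L ->
  Num.sqrt (2 * alpha * p%:R) < #|L|%:R.
Proof.
move=> alpha_gt0; rewrite /covers cardsT card_Fp // setTI => cov.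
rewrite -mulrA; apply: sqrt2_lt_of_le_bin2; first by rewrite mulr_gt0 ?ltr0n ?prime_gt0.
by apply: le_trans cov _; rewrite ler_nat card_intersection_set.
Qed.

End Lines.

Theorem proposition2 (R : realType) (p : nat) (alpha : R) :
  prime p -> 0 < alpha -> alpha <= 1 ->
  exists c : nat, is_generic_complexity alpha [set: 'F_p] c /\
    Num.sqrt (2 * alpha * p%:R) < c%:R /\
    (c%:R : R) <= 2 * (Num.ceil (Num.sqrt (alpha * p%:R)))%:~R.
Proof.
move=> p_pr alpha_gt0 alpha_le1.
set z := Num.ceil (Num.sqrt (alpha * p%:R)); set k := `|z|%N.
have alpha_p_ge0 : 0 <= alpha * p%:R by rewrite mulr_ge0 // ltW.
have covk := covers_grid_lines p_pr alpha_le1 (le_sqr_absz_ceil_sqrt alpha_p_ge0).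
have [c c_complexity le_c_grid] := generic_complexity_le covk.
exists c; split=> //; split.
- by have [[L [<- covL]] _] := c_complexity; exact: covers_sqrt_lt_card.
- have k_z : (k%:R : R) = z%:~R by rewrite natr_absz ger0_norm ?ceil_sqrt_ge0.
  rewrite -k_z -natrM ler_nat mul2n.
  exact: leq_trans le_c_grid (card_grid_lines p k).
Qed.
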